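(* Let $x_1>\cdots>x_N$ be real, $\mathbf y\in\mathbb R^N$, and $\mathbf A\in\{-1,1\}^{N\times N}$ with $\mathbf A_{i,n}=\mathrm{sign}(x_i-x_n)$. Then for every $\beta\ge0$ the problem $\min_{\mathbf z\in\mathbb R^N}\frac12\|\mathbf A\mathbf z-\mathbf y\|_2^2+\beta\|\mathbf z\|_1$ has a unique solution, and the solution of the minimum-norm problem $\min_{\mathbf z}\|\mathbf z\|_1$ subject to $\mathbf A\mathbf z=\mathbf y$ is $\mathbf z^*=\mathbf A^{-1}\mathbf y$.
   Context: $\mathrm{sign}(x)=1$ if $x\ge0$ and $-1$ if $x<0$. (This $\mathbf A$ is the dictionary of a two-layer sign-activated network on one-dimensional data; it is upper triangular-type: entries $1$ on and above the diagonal, $-1$ below.) *)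

From HB Require Import structures.
From mathcomp Require Import all_boot all_order all_algebra.
From mathcomp Require Import reals.
Set Implicit Arguments. Unset Strict Implicit. Unset Printing Implicit Defensive.
Import Order.TTheory GRing.Theory Num.Theory.
Local Open Scope ring_scope.

Definition sgn {R : realType} (x : R) : R := if 0 <= x then 1 else -1.

Definition dict {R : realType} {N : nat} (x : 'I_N -> R) : 'M[R]_N :=
  \matrix_(i < N, n < N) sgn (x i - x n).

Definition sqnorm2 {R : realType} {N : nat} (v : 'cV[R]_N) : R :=
  \sum_(i < N) (v i 0) ^+ 2.
Definition norm1 {R : realType} {N : nat} (v : 'cV[R]_N) : R :=
  \sum_(i < N) `|v i 0|.

Definition lasso_obj {R : realType} {N : nat} (A : 'M[R]_N) (y : 'cV[R]_N)
  (beta : R) (z : 'cV[R]_N) : R :=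
  2^-1 * sqnorm2 (A *m z - y) + beta * norm1 z.

Definition is_minimizer {R : realType} {N : nat} (f : 'cV[R]_N -> R)
  (z : 'cV[R]_N) : Prop := forall z' : 'cV[R]_N, f z <= f z'.

Definition is_minnorm_sol {R : realType} {N : nat} (A : 'M[R]_N)
  (y : 'cV[R]_N) (z : 'cV[R]_N) : Prop :=
  A *m z = y /\ forall z' : 'cV[R]_N, A *m z' = y -> norm1 z <= norm1 z'.

(* Since x is strictly decreasing, dict x has 1 on and above the diagonal
   and -1 below it.  Consecutive entries of A z then differ by 2 z_i, so A is
   injective, hence invertible, and A^-1 y is the only feasible point of the
   minimum-norm problem.  For beta > 0 the lasso objective is continuous and
   coercive (it dominates beta ||z||_1), so it attains its minimum on a box;
   for beta = 0 it vanishes at A^-1 y.  By the parallelogram law the objective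
   at the midpoint of z1 and z2 is at least ||A (z1 - z2)||^2 / 8 below the
   average of its values at z1 and z2, so two minimizers satisfy A z1 = A z2,
   i.e. z1 = z2. *)

From mathcomp Require Import all_boot all_order all_algebra.
From mathcomp Require Import reals.
From mathcomp Require Import ring lra zify.
From mathcomp Require Import boolp classical_sets topology normedtype derive.
Import Order.TTheory GRing.Theory Num.Theory.
Import numFieldNormedType.Exports.
Local Open Scope ring_scope.

Definition upper_sign_mx (R : pzRingType) (n : nat) : 'M[R]_n :=
  \matrix_(i, j) if (i <= j)%N then 1 else -1.

Lemma dict_upper_sign_mx {R : realType} {N : nat} {x : 'I_N -> R} :
  (forall i j : 'I_N, (i < j)%N -> x j < x i) -> dict x = upper_sign_mx R N.
Proof.
move=> x_decr; apply/matrixP => i j; rewrite !mxE /sgn subr_ge0.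
case: ltngtP => [ij|ji|/val_inj->]; last by rewrite lexx.
- by rewrite ltW // x_decr.
- by rewrite leNgt x_decr.
Qed.

Section UpperSignMx.
Variables (R : numDomainType) (N : nat).
Implicit Types z : 'cV[R]_N.

Lemma upper_sign_mx_mulE z (i : 'I_N) :
  (upper_sign_mx R N *m z) i 0 =
  \sum_(n < N) (if (i <= n)%N then z n 0 else - z n 0).
Proof.
rewrite mxE; apply: eq_bigr => n _; rewrite !mxE.
by case: ifP; rewrite ?mul1r ?mulN1r.
Qed.

Lemma upper_sign_mx_mul_succ z (i j : 'I_N) : j = i.+1 :> nat ->
  (upper_sign_mx R N *m z) i 0 - (upper_sign_mx R N *m z) j 0 = z i 0 *+ 2.
Proof.
move=> ji; rewrite !upper_sign_mx_mulE -sumrB (bigD1 i) //= leqnn ji ltnn.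
rewrite big1 ?addr0 ?opprK // => n ni.
have [_|_|eq_in] := ltngtP i n; rewrite ?subrr //.
by move: ni; rewrite -val_eqE /= eq_in eqxx.
Qed.

Lemma upper_sign_mx_ker z : upper_sign_mx R N *m z = 0 -> z = 0.
Proof.
move=> Az0.
have z_nonlast (i : 'I_N) : (i.+1 < N)%N -> z i 0 = 0.
  move=> iN; apply/eqP; rewrite -[_ == 0]/(false || _) -(mulrn_eq0 _ 2).
  by rewrite -(upper_sign_mx_mul_succ z i (Ordinal iN)) // Az0 !mxE subrr.
apply/matrixP => i k; rewrite ord1 mxE.
have [/z_nonlast //|Ni] := ltnP i.+1 N.
have := congr1 (fun w : 'cV_N => w i 0) Az0; rewrite upper_sign_mx_mulE mxE.
rewrite (bigD1 i) //= leqnn big1 ?addr0 // => n ni.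
rewrite z_nonlast ?oppr0 ?if_same //.
by move: (ltn_ord n) (ltn_ord i) ni; rewrite -val_eqE /=; lia.
Qed.

End UpperSignMx.

Lemma upper_sign_mx_unit (R : numFieldType) (N : nat) :
  upper_sign_mx R N \in unitmx.
Proof.
rewrite -unitmx_tr -row_free_unit; apply: inj_row_free => v vA0.
apply: trmx_inj; rewrite trmx0; apply: upper_sign_mx_ker.
by rewrite -[upper_sign_mx _ _]trmxK -trmx_mul vA0 trmx0.
Qed.

Section Norms.
Context {R : realType} {N : nat}.
Implicit Types u v : 'cV[R]_N.

Lemma sqnorm2_ge0 v : 0 <= sqnorm2 v.
Proof. by apply: sumr_ge0 => i _; rewrite sqr_ge0. Qed.

Lemma sqnorm2_eq0 v : (sqnorm2 v == 0) = (v == 0).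
Proof.
apply/idP/eqP => [|->]; last first.
  by rewrite /sqnorm2 big1 // => i _; rewrite mxE expr0n.
rewrite psumr_eq0 => [/allP v0|i _]; last by rewrite sqr_ge0.
apply/matrixP => i j; rewrite ord1 mxE; apply/eqP.
by rewrite -sqrf_eq0; exact: (v0 i (mem_index_enum i)).
Qed.

Lemma coord_le_norm1 v i : `|v i 0| <= norm1 v.
Proof. by rewrite /norm1 (bigD1 i) //= lerDl sumr_ge0. Qed.

Lemma sqnorm2_midpoint u v : sqnorm2 (2^-1 *: (u + v)) =
  2^-1 * sqnorm2 u + 2^-1 * sqnorm2 v - 4^-1 * sqnorm2 (u - v).
Proof.
rewrite /sqnorm2 !mulr_sumr -big_split -sumrB /=.
by apply: eq_bigr => i _; rewrite !mxE; field.
Qed.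

Lemma norm1_midpoint u v :
  norm1 (2^-1 *: (u + v)) <= 2^-1 * norm1 u + 2^-1 * norm1 v.
Proof.
rewrite /norm1 !mulr_sumr -big_split /=; apply: ler_sum => i _.
rewrite !mxE normrM ger0_norm ?invr_ge0 // -mulrDr ler_wpM2l ?invr_ge0 //.
exact: ler_normD.
Qed.

End Norms.

Section Lasso.
Context {R : realType} {N : nat} {A : 'M[R]_N} {y : 'cV[R]_N} {beta : R}.
Implicit Types z : 'cV[R]_N.

Lemma lasso_obj_ge_norm1 z : beta * norm1 z <= lasso_obj A y beta z.
Proof. by rewrite /lasso_obj lerDr mulr_ge0 ?invr_ge0 ?sqnorm2_ge0. Qed.

Lemma lasso_obj_midpoint z1 z2 : 0 <= beta ->
  lasso_obj A y beta (2^-1 *: (z1 + z2)) <=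
  2^-1 * lasso_obj A y beta z1 + 2^-1 * lasso_obj A y beta z2
  - 8^-1 * sqnorm2 (A *m (z1 - z2)).
Proof.
move=> beta_ge0.
have res_mid :
    A *m (2^-1 *: (z1 + z2)) - y = 2^-1 *: ((A *m z1 - y) + (A *m z2 - y)).
  rewrite -scalemxAr mulmxDr; move: (A *m z1) (A *m z2) => a b.
  by apply/matrixP => i j; rewrite !mxE; field.
have res_diff : (A *m z1 - y) - (A *m z2 - y) = A *m (z1 - z2).
  by rewrite opprB addrA subrK mulmxBr.
rewrite /lasso_obj res_mid sqnorm2_midpoint res_diff.
have := ler_wpM2l beta_ge0 (norm1_midpoint z1 z2); lra.
Qed.

Lemma lasso_minimizer_uniq z1 z2 :
  (forall z, A *m z = 0 -> z = 0) -> 0 <= beta ->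
  is_minimizer (lasso_obj A y beta) z1 ->
  is_minimizer (lasso_obj A y beta) z2 ->
  z1 = z2.
Proof.
move=> A_inj beta_ge0 min1 min2; apply/eqP; rewrite -subr_eq0; apply/eqP/A_inj.
apply/eqP; rewrite -sqnorm2_eq0 eq_le sqnorm2_ge0 andbT.
have := lasso_obj_midpoint z1 z2 beta_ge0.
have := min1 (2^-1 *: (z1 + z2)); have := min1 z2; have := min2 z1; lra.
Qed.

End Lasso.

Section Continuity.
Context {R : realType} {N : nat} {T : topologicalType}.
Implicit Types u : T -> 'cV[R]_N.

Lemma continuous_sqnorm2 u :
  (forall i, continuous (fun t => u t i 0)) ->
  continuous (fun t => sqnorm2 (u t)).
Proof.
move=> u_cont; apply: (continuous_big add_continuous) => i _ t.
by apply: cvgM; exact: u_cont.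
Qed.

Lemma continuous_norm1 u :
  (forall i, continuous (fun t => u t i 0)) ->
  continuous (fun t => norm1 (u t)).
Proof.
move=> u_cont; apply: (continuous_big add_continuous) => i _ t.
by apply: cvg_norm; exact: u_cont.
Qed.

Lemma continuous_lasso_obj (A : 'M[R]_N) (y : 'cV[R]_N) (beta : R) u :
  (forall i, continuous (fun t => u t i 0)) ->
  continuous (fun t => lasso_obj A y beta (u t)).
Proof.
move=> u_cont.
have res_cont i : continuous (fun t => (A *m u t - y) i 0).
  have -> : (fun t => (A *m u t - y) i 0) =
            fun t => \sum_j A i j * u t j 0 - y i 0.
    by apply: funext => t; rewrite !mxE.
  have sum_cont : continuous (fun t => \sum_j A i j * u t j 0).
    apply: (continuous_big add_continuous) => j _ t.
    by apply: cvgM; [exact: cvg_cst | exact: u_cont].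
  by move=> t; apply: cvgB; [exact: sum_cont | exact: cvg_cst].
move=> t; apply: cvgD; apply: cvgM; try exact: cvg_cst.
- exact: continuous_sqnorm2.
- exact: continuous_norm1.
Qed.

End Continuity.

Lemma rV_continuous_min_bounded_sublevel {R : realType} {n : nat}
    (g : 'rV[R]_n -> R) (M : R) :
  continuous g -> (forall v, g v <= g 0 -> forall i, `|v ord0 i| <= M) ->
  exists c, forall v, g c <= g v.
Proof.
move=> g_cont g_sub.
pose K := [set v : 'rV[R]_n | forall i, `[- M, M]%classic (v ord0 i)]%classic.
have K_compact : compact K.
  apply: (@rV_compact _ _ (fun=> `[- M, M]%classic)) => i.
  exact: segment_compact.
have sub_K v : g v <= g 0 -> K v.
  by move=> /g_sub v_le i; rewrite /= in_itv /= -ler_norml.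
have [c _ c_min] := compact_EVT_min (ex_intro _ 0 (sub_K 0 (lexx _)))
  K_compact (continuous_subspaceT g_cont).
have c_le0 : g c <= g 0 by apply/c_min/mem_set/sub_K.
exists c => v; have [/sub_K/mem_set/c_min //|/ltW] := leP (g v) (g 0).
exact: le_trans.
Qed.

Lemma lasso_minimizer_exists_gt0 {R : realType} {N : nat} (A : 'M[R]_N)
    (y : 'cV[R]_N) (beta : R) :
  0 < beta -> exists z, is_minimizer (lasso_obj A y beta) z.
Proof.
move=> beta_gt0; set f := lasso_obj A y beta.
have [||c c_min] :=
  rV_continuous_min_bounded_sublevel (fun r => f r^T) (f 0 / beta).
- apply: continuous_lasso_obj => i.
  have -> : (fun r : 'rV[R]_N => r^T i 0) = fun r => r ord0 i.
    by apply: funext => r; rewrite mxE.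
  exact: coord_continuous.
- move=> v; rewrite trmx0 => fv_le i; rewrite ler_pdivlMr // mulrC.
  apply: le_trans fv_le; apply: le_trans (lasso_obj_ge_norm1 v^T).
  rewrite ler_wpM2l ?(ltW beta_gt0) //.
  by have := coord_le_norm1 v^T i; rewrite mxE.
- by exists c^T => z; have := c_min z^T; rewrite trmxK.
Qed.

Lemma lasso_minimizer_exists {R : realType} {N : nat} (A : 'M[R]_N)
    (y : 'cV[R]_N) (beta : R) :
  A \in unitmx -> 0 <= beta -> exists z, is_minimizer (lasso_obj A y beta) z.
Proof.
move=> A_unit; rewrite le_eqVlt => /predU1P[<-|];
  last exact: lasso_minimizer_exists_gt0.
exists (invmx A *m y) => z; rewrite /lasso_obj mulKVmx // subrr !mul0r !addr0.
have /eqP -> : sqnorm2 (0 : 'cV[R]_N) == 0 by rewrite sqnorm2_eq0.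
by rewrite mulr0 mulr_ge0 ?invr_ge0 ?sqnorm2_ge0.
Qed.

Lemma unitmx_minnorm_solE {R : realType} {N : nat} (A : 'M[R]_N)
    (y z : 'cV[R]_N) :
  A \in unitmx -> is_minnorm_sol A y z <-> z = invmx A *m y.
Proof.
move=> A_unit; have sol_uniq z' : A *m z' = y -> z' = invmx A *m y.
  by move=> <-; rewrite mulKmx.
split=> [[/sol_uniq] //|->]; split=> [|z' /sol_uniq -> //]; exact: mulKVmx.
Qed.

Theorem proposition5 (R : realType) (N : nat) (x : 'I_N -> R) (y : 'cV[R]_N)
  (hx : forall i j : 'I_N, (i < j)%N -> x j < x i) :
  (forall beta : R, 0 <= beta ->
     exists z : 'cV[R]_N, is_minimizer (lasso_obj (dict x) y beta) z /\
       forall z' : 'cV[R]_N,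
         is_minimizer (lasso_obj (dict x) y beta) z' -> z' = z) /\
  (dict x \in unitmx /\
   is_minnorm_sol (dict x) y (invmx (dict x) *m y) /\
   forall z' : 'cV[R]_N, is_minnorm_sol (dict x) y z' -> z' = invmx (dict x) *m y).
Proof.
rewrite (dict_upper_sign_mx hx); have A_unit := upper_sign_mx_unit R N.
split=> [beta beta_ge0|].
  have [z z_min] := lasso_minimizer_exists _ y _ A_unit beta_ge0.
  exists z; split=> // z' z'_min.
  exact: lasso_minimizer_uniq (@upper_sign_mx_ker _ _) beta_ge0 z'_min z_min.
split=> //; split=> [|z']; by rewrite unitmx_minnorm_solE.
Qed.
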